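(* Let $M$ be a $\lambda$-term in head-normal form and $\vec x$ a list of $n$ distinct variables with $FV(M)\subseteq\vec x$. Then $\llbracket M\rrbracket_{\vec x}$ is not the zero distributor, i.e. there exist $\Delta\in(SD)^n$ and $a\in D$ with $\llbracket M\rrbracket_{\vec x}(\Delta,a)\neq\emptyset$.
   Context: A $\lambda$-term is in head-normal form if it has the shape $\lambda y_1\dots\lambda y_m.\,y\,Q_1\cdots Q_p$ ($m,p\ge0$, $y$ a variable). $[n]=\{1,\dots,n\}$. Fix a class $\mathcal C$ of functions between finite ordinals equal to one of: all bijections, all injections, all surjections, all functions. For a small category $X$, $SX$ has finite lists of objects of $X$ as objects and morphisms $\langle x_1,\dots,x_n\rangle\to\langle y_1,\dots,y_m\rangle$ the tuples $\langle\alpha,f_1,\dots,f_m\rangle$ with $\alpha:[m]\to[n]$ in $\mathcal C$, $f_i:x_{\alpha(i)}\to y_i$; composite of $\langle\alpha,\vec f\rangle$ then $\langle\beta,\vec g\rangle$ is $\langle\alpha\circ\beta,(g_i\circ f_{\beta(i)})_i\rangle$; tensor $\oplus$ = concatenation, unit $\langle\rangle$. Fix a small category $A$. $D=D_A$ is the colimit of $D_0=A$, $D_{k+1}=(SD_k)^{o}\times D_k\sqcup A$ along canonical inclusions: objects $a::=o\mid\vec a\Rightarrow a$ ($o\in\mathrm{Ob}(A)$); morphisms are those of $A$ and $\langle\alpha,\vec f\rangle\Rightarrow f:(\vec a\Rightarrow a)\to(\vec a'\Rightarrow a')$ for $\langle\alpha,\vec f\rangle:\vec a'\to\vec a$ in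 $SD$, $f:a\to a'$. $SD=S(D_A)$. Contexts are objects of $(SD)^n$; $\otimes$ is componentwise concatenation; $\Delta\oplus\langle\vec a\rangle$ appends a component. Denotation $\llbracket M\rrbracket_{\vec x}:((SD)^n)^{o}\times D\to\mathrm{Set}$ for $\vec x=\langle x_1..x_n\rangle\supseteq FV(M)$: $\llbracket x_i\rrbracket_{\vec x}(\Delta,a)=(SD)^n(\Delta,\langle\langle\rangle,\dots,\langle a\rangle,\dots,\langle\rangle\rangle)$ ($\langle a\rangle$ at position $i$); $\llbracket\lambda y.P\rrbracket_{\vec x}(\Delta,a)=\llbracket P\rrbracket_{\vec x\oplus\langle y\rangle}(\Delta\oplus\langle\vec a'\rangle,a')$ if $a=\vec a'\Rightarrow a'$, $\emptyset$ if $a$ atomic; $\llbracket PQ\rrbracket_{\vec x}(\Delta,a)=\int^{\vec a=\langle a_1..a_k\rangle\in SD}\int^{\Gamma_0..\Gamma_k\in(SD)^n}\llbracket P\rrbracket_{\vec x}(\Gamma_0,\vec a\Rightarrow a)\times\prod_{i=1}^k\llbracket Q\rrbracket_{\vec x}(\Gamma_i,a_i)\times(SD)^n(\Delta,\bigotimes_{i=0}^k\Gamma_i)$. *)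

From mathcomp Require Import all_boot.
Set Implicit Arguments.
Unset Strict Implicit.
Unset Printing Implicit Defensive.

(* Small categories (the fixed category A).  comp f g = "g after f".  *)
Record Cat := {
  Ob : Type;
  Hom : Ob -> Ob -> Type;
  idm : forall x, Hom x x;
  comp : forall x y z, Hom x y -> Hom y z -> Hom x z;
  comp_id_l : forall x y (f : Hom x y), comp (idm x) f = f;
  comp_id_r : forall x y (f : Hom x y), comp f (idm y) = f;
  comp_assoc : forall x y z w (f : Hom x y) (g : Hom y z) (h : Hom z w),
      comp (comp f g) h = comp f (comp g h)
}.

(* The class C of functions between finite ordinals [m] -> [n]. *)
Inductive fclass := CBij | CInj | CSurj | CAll.

Definition inC (c : fclass) (m n : nat) (al : 'I_m -> 'I_n) : Prop :=
  match c with
  | CBij => bijective al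
  | CInj => injective al
  | CSurj => forall j : 'I_n, exists i : 'I_m, al i = j
  | CAll => True
  end.

Definition nthT (X : Type) (l : seq X) (i : 'I_(size l)) : X := tnth (in_tuple l) i.
Arguments nthT {X} l i.

Section D.
Variable A : Cat.
Variable c : fclass.

Inductive ty : Type :=
| Atom (o : Ob A)
| Arr (l : seq ty) (a : ty).

(* Morphisms of D: those of A, and <al, f_i> => f : (l => a) -> (l' => a')
   where <al, f_i> : l' -> l in SD  (al : [|l|] -> [|l'|] in C,
   f_i : l'_(al i) -> l_i) and f : a -> a'. *)
Inductive homD : ty -> ty -> Type :=
| hAtom (o o' : Ob A) (f : @Hom A o o') : homD (Atom o) (Atom o')
| hArr (l l' : seq ty) (a a' : ty)
       (al : 'I_(size l) -> 'I_(size l')) (Hal : inC c al)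
       (fs : forall i : 'I_(size l), homD (nthT l' (al i)) (nthT l i))
       (f : homD a a') : homD (Arr l a) (Arr l' a').

(* Morphisms of SD: <x_1..x_n> -> <y_1..y_m> are <al, f_1..f_m>,
   al : [m] -> [n] in C, f_i : x_(al i) -> y_i. *)
Record homS (x y : seq ty) : Type := HomS {
  s_al : 'I_(size y) -> 'I_(size x);
  s_C : inC c s_al;
  s_f : forall i : 'I_(size y), homD (nthT x (s_al i)) (nthT y i)
}.

(* Contexts: objects of (SD)^n. *)
Definition ctx (n : nat) := 'I_n -> seq ty.

Definition homCtx (n : nat) (D G : ctx n) : Type := forall j : 'I_n, homS (D j) (G j).

Definition bigtensor (n k : nat) (G : 'I_k -> ctx n) : ctx n :=
  fun j => flatten [seq G i j | i <- enum 'I_k].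

Definition extc (n : nat) (D : ctx n) (l : seq ty) : ctx n.+1 :=
  fun j => match unlift ord_max j with Some k => D k | None => l end.

Definition unitc (n : nat) (i : 'I_n) (a : ty) : ctx n :=
  fun j => if j == i then [:: a] else [::].

End D.

Inductive term : Type :=
| Var (x : nat)
| Lam (x : nat) (t : term)
| App (t u : term).

Fixpoint fv (t : term) : seq nat :=
  match t with
  | Var x => [:: x]
  | Lam x t => [seq z <- fv t | z != x]
  | App t u => fv t ++ fv u
  end.

Definition lams (ys : seq nat) (t : term) : term := foldr Lam t ys.
Definition apps (t : term) (us : seq term) : term := foldl App t us.

Definition hnf (M : term) : Prop :=
  exists (ys : seq nat) (y : nat) (Qs : seq term), M = lams ys (apps (Var y) Qs).

(* Denotation.  [env] maps a variable name to its position in the list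
   of variables x_1..x_n (None if absent).  Binding y appends y at the
   end (position n+1), shadowing any earlier y (Barendregt convention).
   The coend in the application case is represented by its underlying
   dependent sum. *)
Section Sem.
Variable A : Cat.
Variable c : fclass.

Definition envExt (n : nat) (env : nat -> option 'I_n) (y : nat) : nat -> option 'I_n.+1 :=
  fun z => if z == y then Some ord_max else omap (widen_ord (leqnSn n)) (env z).

Fixpoint sem (M : term) (n : nat) (env : nat -> option 'I_n)
         (D : ctx A n) (a : ty A) {struct M} : Type :=
  match M with
  | Var x =>
      match env x with
      | Some i => homCtx c D (unitc i a)
      | None => Empty_set
      end
  | Lam y P =>
      match a with
      | Arr l a' => sem P (envExt env y) (extc D l) a'
      | Atom _ => Empty_set
      end
  | App P Q =>
      { abar : seq (ty A) &
      { G : 'I_(size abar).+1 -> ctx A n &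
        (sem P env (G ord0) (Arr abar a)
         * (forall i : 'I_(size abar), sem Q env (G (lift ord0 i)) (nthT abar i))
         * homCtx c D (bigtensor G))%type } }
  end.

Definition envOf (xs : seq nat) : nat -> option 'I_(size xs) :=
  fun z => insub (index z xs).

Definition denot (M : term) (xs : seq nat) (D : ctx A (size xs)) (a : ty A) : Type :=
  sem M (envOf xs) D a.

End Sem.
Arguments denot {A} c M xs D a.

From mathcomp Require Import all_boot.
From Stdlib Require Import FunctionalExtensionality.

Set Implicit Arguments.
Unset Strict Implicit.
Unset Printing Implicit Defensive.

(* For a head variable [y] applied to [p] arguments, put at [y] the object
   [<> => ... => <> => o] with [k + p] arrows and ask for the result at the
   object with [k] arrows: each application is then an application to the
   empty list of arguments, so the coend of the application case only needs
   the empty family of arguments and never a point of the denotation of an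
   argument [Q_i].  An abstraction [\z. P] is nonzero as soon as [P] is,
   since every context of length [n+1] splits as [D (+) <l>]. *)

Lemma inC_id (c : fclass) (n : nat) : inC c (fun i : 'I_n => i).
Proof. by case: c => //=; [exists id | move=> j; exists j]. Qed.

Lemma inC_ord0 (c : fclass) (al : 'I_0 -> 'I_0) : inC c al.
Proof.
case: c => //=; last by case.
- by exists al; case.
- by case.
Qed.

Lemma nthT_seq1 (X : Type) (x : X) (i : 'I_(size [:: x])) : nthT [:: x] i = x.
Proof. by case: i => [[|]]. Qed.

Lemma bigtensor_ord1 (A : Cat) (n : nat) (D : ctx A n) (j : 'I_n) :
  bigtensor (fun _ : 'I_1 => D) j = D j.
Proof. by rewrite /bigtensor enum_ordSl enum_ord0 /= cats0. Qed.

Lemma extc_split (A : Cat) (n : nat) (D : ctx A n.+1) :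
  extc (fun j => D (widen_ord (leqnSn n) j)) (D ord_max) = D.
Proof.
apply: functional_extensionality => j; rewrite /extc.
case: unliftP => [k ->|-> //]; congr (D _); apply/val_inj.
by rewrite /= /bump leqNgt ltn_ord.
Qed.

Section Morphisms.
Variables (A : Cat) (c : fclass).

Definition homS_nil : homS c [::] (@nil (ty A)).
Proof. by apply: (@HomS _ _ [::] [::] (fun i => i) (inC_id c 0)); case. Defined.

Definition homS_seq1 (a b : ty A) (f : homD c a b) : homS c [:: a] [:: b].
Proof.
apply: (@HomS _ _ [:: a] [:: b] (fun i => i) (inC_id c 1)) => i.
by rewrite !nthT_seq1.
Defined.

Lemma homCtx_unitc (n : nat) (i : 'I_n) (a b : ty A) :
  homD c a b -> homCtx c (unitc i a) (unitc i b).
Proof.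
by move=> f j; rewrite /unitc; case: (j == i); [exact: homS_seq1 | exact: homS_nil].
Qed.

Variable o : Ob A.

Fixpoint nullary_tower (k : nat) : ty A :=
  if k is k'.+1 then Arr [::] (nullary_tower k') else Atom o.

Lemma homD_tower_id (k : nat) : homD c (nullary_tower k) (nullary_tower k).
Proof.
elim: k => [|k f] /=; first exact: hAtom (idm o).
by apply: (@hArr _ _ [::] [::] _ _ (fun i => i) (inC_ord0 c _)) => //; case.
Qed.

End Morphisms.

Section Nonzero.
Variables (A : Cat) (c : fclass).

Definition sem_nonzero (t : term) (n : nat) (env : nat -> option 'I_n) : Prop :=
  exists (D : ctx A n) (a : ty A), inhabited (sem c t env D a).

Lemma sem_App_nil (P Q : term) (n : nat) (env : nat -> option 'I_n)
    (D D' : ctx A n) (a : ty A) :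
  sem c P env D (Arr [::] a) -> homCtx c D' D -> sem c (App P Q) env D' a.
Proof.
move=> p f; exists [::], (fun _ => D); split; [split|] => //; first by case.
by move=> j; rewrite bigtensor_ord1; apply: f.
Qed.

Lemma sem_apps_Var (o : Ob A) (y : nat) (Qs : seq term) (n : nat)
    (env : nat -> option 'I_n) (i : 'I_n) (k : nat) :
  env y = Some i ->
  inhabited (sem c (apps (Var y) Qs) env
                 (unitc i (nullary_tower o (k + size Qs))) (nullary_tower o k)).
Proof.
move=> env_y; elim/last_ind: Qs k => [|Qs Q IH] k.
  by rewrite /= env_y addn0; constructor; apply: homCtx_unitc; exact: homD_tower_id.
rewrite size_rcons addnS /apps -cats1 foldl_cat /= -/(apps _ _).
have [p] := IH k.+1; constructor; apply: sem_App_nil p _.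
by rewrite addSn; apply: homCtx_unitc; exact: (homD_tower_id c o (k + size Qs).+1).
Qed.

Lemma sem_nonzero_Lam (z : nat) (P : term) (n : nat) (env : nat -> option 'I_n) :
  sem_nonzero P (envExt env z) -> sem_nonzero (Lam z P) env.
Proof.
case=> D [a p]; exists (fun j => D (widen_ord (leqnSn n) j)), (Arr (D ord_max) a).
by rewrite /= extc_split.
Qed.

Lemma envExt_defined (n : nat) (env : nat -> option 'I_n) (z y : nat) :
  (y == z) || (env y != None) -> envExt env z y != None.
Proof. by rewrite /envExt; case: (y == z) => //=; case: (env y). Qed.

Lemma sem_nonzero_lams (t : term) (y : nat) (ys : seq nat) :
  (forall n (env : nat -> option 'I_n), env y != None -> sem_nonzero t env) ->
  forall n (env : nat -> option 'I_n),
    (y \in ys) || (env y != None) -> sem_nonzero (lams ys t) env.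
Proof.
move=> t_nz; elim: ys => [|z ys IH] n env /= y_ok; first exact: t_nz.
apply/sem_nonzero_Lam/IH; move: y_ok; rewrite in_cons -orbA.
case/orP=> [yz | /orP[-> // | y_def]]; by rewrite envExt_defined ?yz ?y_def ?orbT.
Qed.

Lemma sem_nonzero_hnf (o : Ob A) (ys : seq nat) (y : nat) (Qs : seq term)
    (n : nat) (env : nat -> option 'I_n) :
  (y \in ys) || (env y != None) -> sem_nonzero (lams ys (apps (Var y) Qs)) env.
Proof.
apply: sem_nonzero_lams => {}n {}env.
case env_y: (env y) => [i|] // _.
exists (unitc i (nullary_tower o (0 + size Qs))), (nullary_tower o 0).
exact: sem_apps_Var.
Qed.

End Nonzero.

Lemma mem_fv_apps (y : nat) (t : term) (Qs : seq term) :
  y \in fv t -> y \in fv (apps t Qs).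
Proof. by elim: Qs t => [|Q Qs IH] t //= y_t; apply: IH; rewrite mem_cat y_t. Qed.

Lemma mem_fv_lams (y : nat) (ys : seq nat) (t : term) :
  y \in fv t -> y \notin ys -> y \in fv (lams ys t).
Proof.
elim: ys => [|z ys IH] //= y_t; rewrite in_cons negb_or => /andP[yz y_ys].
by rewrite mem_filter yz IH.
Qed.

Lemma envOf_defined (xs : seq nat) (y : nat) : y \in xs -> envOf xs y != None.
Proof. by move=> y_xs; rewrite /envOf insubT ?index_mem. Qed.

Theorem lemma3 (A : Cat) (c : fclass) (HA : inhabited (Ob A))
  (M : term) (xs : seq nat) :
  hnf M -> uniq xs -> {subset fv M <= xs} ->
  exists (D : ctx A (size xs)) (a : ty A), inhabited (denot c M xs D a).
Proof.
(* [envOf] resolves a name to its first occurrence. *)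
case: HA => o [ys [y [Qs ->]]] _ fv_sub.
apply: (sem_nonzero_hnf c o); case: (boolP (y \in ys)) => //= y_ys.
apply/envOf_defined/fv_sub/mem_fv_lams => //.
by apply: mem_fv_apps; rewrite inE.
Qed.
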